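(* It holds that $\Gamma(\mathcal{C}^I)\subseteq\mathcal{F}$.
   Context: Fix $I\in\mathbb{N}$. $\mathcal{C}=\{f\in C(\mathbb{R}_+,\mathbb{R}_+):f(0)=0,f\text{ non-decreasing}\}$, $\mathcal{C}^\uparrow=\{f\in\mathcal{C}:f\text{ strictly increasing},\lim_{u\to\infty}f(u)=\infty\}$. For $\psi\in\mathcal{C}^I$, $\phi_i(u):=u-\sum_{j=1}^I2(i\wedge j)\psi_j(u)$, and $\mathcal{F}:=\{\psi\in\mathcal{C}^I:\phi_I\in\mathcal{C}^\uparrow\}$. For $\bar\psi\in\mathcal{C}^I$, $\gamma_I(z):=z$ and $\gamma_i(z):=z+\sum_{j>i}2(j-i)\bar\psi_j(\gamma_j(z))$ for $i=I-1,\dots,0$ (each $\gamma_i\in\mathcal{C}^\uparrow$, so $\gamma_0^{-1}$ exists); $\Gamma(\bar\psi):=(\bar\psi_i\circ\gamma_i\circ\gamma_0^{-1})_{i=1}^I$. *)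

(* concrete reals R. Functions R_+ -> R_+ are modelled as
   R -> R functions whose values off [0, +oo) are irrelevant. *)
From Stdlib Require Import Reals Lra Lia List ClassicalEpsilon.
Import ListNotations.
Open Scope R_scope.

Definition lsum (l : list nat) (F : nat -> R) : R :=
  fold_right Rplus 0 (map F l).

Definition cont_nonneg (f : R -> R) : Prop :=
  forall u, 0 <= u -> forall eps, 0 < eps -> exists delta, 0 < delta /\
    forall v, 0 <= v -> Rabs (v - u) < delta -> Rabs (f v - f u) < eps.

Definition inC (f : R -> R) : Prop :=
  cont_nonneg f /\
  (forall u, 0 <= u -> 0 <= f u) /\
  f 0 = 0 /\
  (forall u v, 0 <= u -> u <= v -> f u <= f v).

Definition inCup (f : R -> R) : Prop :=
  inC f /\
  (forall u v, 0 <= u -> u < v -> f u < f v) /\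
  (forall M, exists N, 0 <= N /\ forall u, N <= u -> M < f u).

(* psi : nat -> (R -> R) represents (psi_1, ..., psi_I) (indices 1..I) *)
Definition inCI (I : nat) (psi : nat -> R -> R) : Prop :=
  forall i, (1 <= i <= I)%nat -> inC (psi i).

Definition phi (I : nat) (psi : nat -> R -> R) (i : nat) (u : R) : R :=
  u - lsum (seq 1 I) (fun j => 2 * INR (Nat.min i j) * psi j u).

Definition inF (I : nat) (psi : nat -> R -> R) : Prop :=
  inCI I psi /\ inCup (phi I psi I).

(* gamma with fuel:  gam (S f) i z = z + sum_{j=i+1}^I 2 (j-i) psib_j (gam f j z).
   With fuel I - i this computes the paper's gamma_i (see gamma_rec below). *)
Fixpoint gam (I : nat) (psib : nat -> R -> R) (fuel i : nat) (z : R) : R :=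
  match fuel with
  | O => z
  | S f => z + lsum (seq (S i) (I - i))
                   (fun j => 2 * INR (j - i) * psib j (gam I psib f j z))
  end.

Definition gamma (I : nat) (psib : nat -> R -> R) (i : nat) (z : R) : R :=
  gam I psib (I - i) i z.

(* inverse on [0,+oo) of a function (well defined when f is in C^up):
   some u >= 0 with f u = z *)
Definition inv_nonneg (f : R -> R) (z : R) : R :=
  epsilon (inhabits 0) (fun u => 0 <= u /\ f u = z).

Definition Gamma (I : nat) (psib : nat -> R -> R) : nat -> R -> R :=
  fun i u => psib i (gamma I psib i (inv_nonneg (gamma I psib 0) u)).

Lemma gam_indep I psib f g i z : (I - i <= f)%nat -> (I - i <= g)%nat ->
  gam I psib f i z = gam I psib g i z.
Proof.
  revert g i z. induction f as [|f IH]; intros g i z Hf Hg.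
  - destruct g as [|g]; [reflexivity|]. simpl.
    assert (E : (I - i = 0)%nat) by lia. rewrite E. unfold lsum. simpl. lra.
  - destruct g as [|g].
    + simpl. assert (E : (I - i = 0)%nat) by lia. rewrite E. unfold lsum. simpl. lra.
    + simpl. f_equal. unfold lsum. f_equal.
      apply map_ext_in. intros j Hj. apply in_seq in Hj.
      rewrite (IH g) by lia. reflexivity.
Qed.

Lemma gam_fuel I psib f i z : (I - i <= f)%nat ->
  gam I psib f i z = gamma I psib i z.
Proof. intros H. unfold gamma. apply gam_indep; lia. Qed.

Lemma gamma_I I psib z : gamma I psib I z = z.
Proof. unfold gamma. rewrite Nat.sub_diag. reflexivity. Qed.

Lemma gamma_rec I psib i z : (i < I)%nat ->
  gamma I psib i z =
  z + lsum (seq (S i) (I - i)) (fun j => 2 * INR (j - i) * psib j (gamma I psib j z)).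
Proof.
  intros H. unfold gamma at 1. destruct (I - i)%nat eqn:E; [lia|].
  cbn [gam]. f_equal. rewrite <- E. unfold lsum. f_equal. apply map_ext_in.
  intros j Hj. apply in_seq in Hj. rewrite gam_fuel by lia. reflexivity.
Qed.

(* Each gamma_i is the identity plus a function of C, so gamma_i - id is non-decreasing:
   gamma_i expands distances.  Hence gamma_0 maps [0,+oo) onto itself, and its inverse is
   continuous, strictly increasing, 1-Lipschitz and unbounded, i.e. lies in C^up.  The
   components of Gamma are compositions of functions of C.  Finally, since
   (2 (I /\ j)) = 2 j = 2 (j - 0), the recursion for gamma_0 gives
   phi_I(Gamma psib)(u) = u - (gamma_0 (gamma_0^{-1} u) - gamma_0^{-1} u) = gamma_0^{-1} u. *)

From Stdlib Require Import Reals Lra Lia List ClassicalEpsilon.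
Open Scope R_scope.

Ltac solve_abs := unfold Rabs in *; repeat destruct Rcase_abs; lra.

Lemma cont_nonneg_ext f g :
  (forall u, 0 <= u -> f u = g u) -> cont_nonneg f -> cont_nonneg g.
Proof.
  intros E C u Hu eps He. destruct (C u Hu eps He) as [d [Hd Hv]].
  exists d; split; auto. intros v Hv0 Hvu. rewrite <- !E by lra. auto.
Qed.

Lemma cont_nonneg_1lipschitz f :
  (forall u v, 0 <= u -> 0 <= v -> Rabs (f v - f u) <= Rabs (v - u)) -> cont_nonneg f.
Proof.
  intros L u Hu eps He. exists eps; split; auto. intros v Hv Hvu.
  specialize (L u v Hu Hv). lra.
Qed.

Lemma cont_nonneg_id : cont_nonneg (fun u => u).
Proof. apply cont_nonneg_1lipschitz. intros; lra. Qed.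

Lemma cont_nonneg_const c : cont_nonneg (fun _ => c).
Proof. apply cont_nonneg_1lipschitz. intros. solve_abs. Qed.

Lemma cont_nonneg_plus f g :
  cont_nonneg f -> cont_nonneg g -> cont_nonneg (fun u => f u + g u).
Proof.
  intros Cf Cg u Hu eps He.
  destruct (Cf u Hu (eps/2)) as [d1 [Hd1 H1]]; [lra|].
  destruct (Cg u Hu (eps/2)) as [d2 [Hd2 H2]]; [lra|].
  exists (Rmin d1 d2); split; [apply Rmin_pos; auto|].
  intros v Hv Hvu.
  assert (A := H1 v Hv ltac:(pose proof (Rmin_l d1 d2); lra)).
  assert (B := H2 v Hv ltac:(pose proof (Rmin_r d1 d2); lra)).
  solve_abs.
Qed.

Lemma cont_nonneg_scale c f : cont_nonneg f -> cont_nonneg (fun u => c * f u).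
Proof.
  intros Cf u Hu eps He.
  pose proof (Rabs_pos c) as Hc.
  assert (Hp : 0 < eps / (Rabs c + 1)) by (apply Rdiv_lt_0_compat; lra).
  destruct (Cf u Hu _ Hp) as [d [Hd H]].
  exists d; split; auto. intros v Hv Hvu.
  replace (c * f v - c * f u) with (c * (f v - f u)) by ring.
  rewrite Rabs_mult.
  assert (Hle : Rabs c * Rabs (f v - f u) <= Rabs c * (eps / (Rabs c + 1))).
  { apply Rmult_le_compat_l; [auto | left; apply H; auto]. }
  replace (Rabs c * (eps / (Rabs c + 1))) with (eps - eps / (Rabs c + 1)) in Hle
    by (field; lra).
  lra.
Qed.

Lemma cont_nonneg_comp f g : cont_nonneg f -> (forall u, 0 <= u -> 0 <= f u) ->
  cont_nonneg g -> cont_nonneg (fun u => g (f u)).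
Proof.
  intros Cf Pf Cg u Hu eps He.
  destruct (Cg (f u) (Pf u Hu) eps He) as [d1 [Hd1 H1]].
  destruct (Cf u Hu d1 Hd1) as [d2 [Hd2 H2]].
  exists d2; split; [auto|]. intros v Hv Hvu. apply H1; auto.
Qed.

Lemma cont_nonneg_continuity_Rmax f :
  cont_nonneg f -> continuity (fun x => f (Rmax 0 x)).
Proof.
  intros C x eps He. simpl. unfold R_dist.
  destruct (C _ (Rmax_l 0 x) eps He) as [d [Hd Hv]].
  exists d; split; auto. intros v [_ Hvx].
  apply Hv; [apply Rmax_l|].
  unfold Rmax; destruct (Rle_dec 0 v); destruct (Rle_dec 0 x); solve_abs.
Qed.

Lemma inC_ext f g : (forall u, 0 <= u -> f u = g u) -> inC f -> inC g.
Proof.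
  intros E [C [N [Z M]]]. split; [|split; [|split]].
  - eapply cont_nonneg_ext; eauto.
  - intros u Hu; rewrite <- E; auto.
  - rewrite <- E; auto; lra.
  - intros u v Hu Huv; rewrite <- !E; auto; lra.
Qed.

Lemma inC_comp f g : inC f -> inC g -> inC (fun u => g (f u)).
Proof.
  intros [Cf [Nf [Zf Mf]]] [Cg [Ng [Zg Mg]]]. split; [|split; [|split]].
  - apply cont_nonneg_comp; auto.
  - intros; apply Ng; auto.
  - rewrite Zf; auto.
  - intros u v Hu Huv. apply Mg; auto.
Qed.

Lemma inC_plus f g : inC f -> inC g -> inC (fun u => f u + g u).
Proof.
  intros [Cf [Nf [Zf Mf]]] [Cg [Ng [Zg Mg]]]. split; [|split; [|split]].
  - apply cont_nonneg_plus; auto.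
  - intros u Hu; specialize (Nf u Hu); specialize (Ng u Hu); lra.
  - rewrite Zf, Zg; lra.
  - intros u v Hu Huv. specialize (Mf u v Hu Huv); specialize (Mg u v Hu Huv); lra.
Qed.

Lemma inC_scale c f : 0 <= c -> inC f -> inC (fun u => c * f u).
Proof.
  intros Hc [Cf [Nf [Zf Mf]]]. split; [|split; [|split]].
  - apply cont_nonneg_scale; auto.
  - intros u Hu; apply Rmult_le_pos; auto.
  - rewrite Zf; ring.
  - intros u v Hu Huv. apply Rmult_le_compat_l; auto.
Qed.

Lemma inC_id : inC (fun u => u).
Proof. repeat split; auto using cont_nonneg_id. Qed.

Lemma inC_zero : inC (fun _ => 0).
Proof. repeat split; auto using cont_nonneg_const; intros; lra. Qed.

Lemma inC_lsum (l : list nat) (G : nat -> R -> R) :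
  (forall j, In j l -> inC (G j)) -> inC (fun z => lsum l (fun j => G j z)).
Proof.
  induction l as [|a l IH]; intros H.
  - apply inC_zero.
  - apply (inC_plus (G a) (fun z => lsum l (fun j => G j z))).
    + apply H; simpl; auto.
    + apply IH; intros j Hj; apply H; simpl; auto.
Qed.

Lemma inCup_ext f g : (forall u, 0 <= u -> f u = g u) -> inCup f -> inCup g.
Proof.
  intros E [C [S U]]. split; [eapply inC_ext; eauto|]. split.
  - intros u v Hu Huv. rewrite <- !E by lra. auto.
  - intros M. destruct (U M) as [N [HN HU]]. exists N; split; auto.
    intros u Hu. rewrite <- E by lra. auto.
Qed.

Lemma lsum_ext l F G : (forall j, In j l -> F j = G j) -> lsum l F = lsum l G.
Proof. intros H. unfold lsum. f_equal. apply map_ext_in. auto. Qed.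

Definition expanding (g : R -> R) : Prop :=
  inC g /\ forall u v, 0 <= u -> u <= v -> v - u <= g v - g u.

Lemma expanding_ext f g : (forall u, 0 <= u -> f u = g u) -> expanding f -> expanding g.
Proof.
  intros E [C L]. split; [eapply inC_ext; eauto|].
  intros u v Hu Huv. rewrite <- !E by lra. auto.
Qed.

Lemma expanding_id_plus S : inC S -> expanding (fun z => z + S z).
Proof.
  intros HS. split; [apply inC_plus; auto using inC_id|].
  destruct HS as [_ [_ [_ M]]]. intros u v Hu Huv. specialize (M u v Hu Huv). lra.
Qed.

Lemma expanding_id : expanding (fun z => z).
Proof.
  apply expanding_ext with (fun z => z + 0); [intros; ring|].
  apply (expanding_id_plus (fun _ => 0)), inC_zero.
Qed.

Lemma expanding_onto g : expanding g -> forall y, 0 <= y -> exists u, 0 <= u /\ g u = y.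
Proof.
  intros [[C [_ [Z _]]] L] y Hy.
  assert (Hc : continuity (fun x => g (Rmax 0 x) - y)).
  { apply continuity_minus; [apply cont_nonneg_continuity_Rmax, C|apply continuity_const].
    intros ? ?; reflexivity. }
  destruct (IVT_cor _ 0 y Hc Hy) as [z [Hz Ez]].
  - rewrite Rmax_left, Rmax_right, Z by lra.
    specialize (L 0 y ltac:(lra) Hy). rewrite Z in L.
    assert (0 <= g y - y) by lra. nra.
  - exists z. split; [lra|]. rewrite Rmax_right in Ez by lra. lra.
Qed.

Section ExpandingInverse.

Variable g : R -> R.
Hypothesis Hg : expanding g.

Let ginv := inv_nonneg g.

Lemma inv_nonneg_spec z : 0 <= z -> 0 <= ginv z /\ g (ginv z) = z.
Proof.
  intros Hz. apply (epsilon_spec (inhabits 0) (fun u => 0 <= u /\ g u = z)).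
  apply expanding_onto; auto.
Qed.

Lemma inv_nonneg_contracting z z' :
  0 <= z -> z <= z' -> 0 <= ginv z' - ginv z <= z' - z.
Proof.
  intros Hz Hzz. destruct Hg as [_ L].
  destruct (inv_nonneg_spec z Hz) as [A1 B1].
  destruct (inv_nonneg_spec z' ltac:(lra)) as [A2 B2].
  destruct (Rle_or_lt (ginv z) (ginv z')) as [Hle|Hlt].
  - specialize (L _ _ A1 Hle). lra.
  - specialize (L _ _ A2 (Rlt_le _ _ Hlt)). lra.
Qed.

Lemma inv_nonneg_inC : inC ginv.
Proof.
  destruct Hg as [[_ [_ [Z _]]] L].
  split; [|split; [|split]].
  - apply cont_nonneg_1lipschitz. intros u v Hu Hv.
    destruct (Rle_or_lt u v) as [Huv|Hvu].
    + specialize (inv_nonneg_contracting u v Hu Huv). solve_abs.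
    + specialize (inv_nonneg_contracting v u Hv ltac:(lra)). solve_abs.
  - intros u Hu; apply inv_nonneg_spec; auto.
  - destruct (inv_nonneg_spec 0 ltac:(lra)) as [A B].
    specialize (L 0 (ginv 0) ltac:(lra) A). lra.
  - intros u v Hu Huv. specialize (inv_nonneg_contracting u v Hu Huv). lra.
Qed.

Lemma inv_nonneg_inCup : inCup ginv.
Proof.
  destruct Hg as [[_ [_ [Z M]]] L].
  split; [exact inv_nonneg_inC|split].
  - intros u v Hu Huv. destruct (inv_nonneg_spec u Hu) as [A1 B1].
    destruct (inv_nonneg_spec v ltac:(lra)) as [A2 B2].
    destruct (Rlt_or_le (ginv u) (ginv v)) as [Hl|Hl]; auto.
    specialize (M _ _ A2 Hl). lra.
  - intros K. set (x := Rabs K + 1).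
    assert (Hx : Rabs K < x) by (unfold x; lra).
    assert (Hgx : x <= g x).
    { specialize (L 0 x ltac:(lra) ltac:(pose proof (Rabs_pos K); lra)). lra. }
    exists (g x + 1). split; [pose proof (Rabs_pos K); lra|].
    intros u Hu. destruct (inv_nonneg_spec u ltac:(pose proof (Rabs_pos K); lra)) as [A B].
    destruct (Rlt_or_le K (ginv u)) as [Hl|Hl]; auto.
    specialize (M _ x A ltac:(pose proof (Rle_abs K); lra)). lra.
Qed.

End ExpandingInverse.

Lemma gamma_expanding I psib : inCI I psib -> forall i, expanding (gamma I psib i).
Proof.
  intros H.
  assert (K : forall n i, (I - i <= n)%nat -> expanding (gamma I psib i)).
  { induction n as [|n IH]; intros i Hi.
    - unfold gamma. replace (I - i)%nat with 0%nat by lia. exact expanding_id.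
    - destruct (Compare_dec.le_lt_dec I i) as [Hle|Hlt].
      + unfold gamma. replace (I - i)%nat with 0%nat by lia. exact expanding_id.
      + apply expanding_ext with (fun z => z + lsum (seq (S i) (I - i))
            (fun j => 2 * INR (j - i) * psib j (gamma I psib j z))).
        { intros u _. symmetry. apply gamma_rec; auto. }
        apply expanding_id_plus, inC_lsum. intros j Hj. apply in_seq in Hj.
        apply inC_scale; [apply Rmult_le_pos; [lra | apply pos_INR]|].
        apply (inC_comp (gamma I psib j) (psib j)); [apply IH; lia | apply H; lia]. }
  intros i. apply (K (I - i)%nat). lia.
Qed.

Lemma gamma0_eq I psib z :
  gamma I psib 0 z = z + lsum (seq 1 I) (fun j => 2 * INR j * psib j (gamma I psib j z)).
Proof.
  destruct I as [|I].
  - unfold gamma, lsum. simpl. ring.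
  - rewrite gamma_rec by lia. f_equal. rewrite Nat.sub_0_r. apply lsum_ext.
    intros j _. rewrite Nat.sub_0_r. reflexivity.
Qed.

Lemma Gamma_inCI I psib : inCI I psib -> inCI I (Gamma I psib).
Proof.
  intros H i Hi. unfold Gamma.
  apply (inC_comp _ (fun z => psib i (gamma I psib i z))).
  - apply inv_nonneg_inC, gamma_expanding, H.
  - apply inC_comp; [apply gamma_expanding, H | apply H; auto].
Qed.

Lemma phi_Gamma I psib u : inCI I psib -> 0 <= u ->
  phi I (Gamma I psib) I u = inv_nonneg (gamma I psib 0) u.
Proof.
  intros H Hu. unfold phi, Gamma.
  set (z := inv_nonneg (gamma I psib 0) u).
  destruct (inv_nonneg_spec _ (gamma_expanding I psib H 0) u Hu) as [_ Hz].
  fold z in Hz. rewrite gamma0_eq in Hz.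
  rewrite (lsum_ext _ _ (fun j => 2 * INR j * psib j (gamma I psib j z))); [lra|].
  intros j Hj. apply in_seq in Hj. rewrite Nat.min_r by lia. reflexivity.
Qed.

Theorem proposition3p6 (I : nat) (psib : nat -> R -> R) :
  inCI I psib -> inF I (Gamma I psib).
Proof.
  intros H. split; [apply Gamma_inCI, H|].
  apply inCup_ext with (inv_nonneg (gamma I psib 0)).
  - intros u Hu. symmetry. apply phi_Gamma; auto.
  - apply inv_nonneg_inCup, gamma_expanding, H.
Qed.
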